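(* Let $U\subseteq\mathrm{Homeo}^+(\mathbb{R})$ and let $\sim$ be an equivalence relation on $\mathbb{R}$ such that: (1) no $\sim$-equivalence class has full measure (i.e., for each class $C$, $\mathbb{R}\setminus C$ has positive outer Lebesgue measure); and (2) for every $(x,y)\in\mathbb{R}^2$ there is $\varphi\in U$ with $\varphi(x)=y$ and $z\sim\varphi(z)$ for all $z\neq x$. Then there is no good $U$-anonymous weak $\mathbb{R}/\sim$-predictor. In fact, for every $U$-anonymous weak $\mathbb{R}/\sim$-predictor $\mathcal{P}$, the function $E:\mathbb{R}\to\mathbb{R}/\sim$, $E(x)=[x]_\sim$, satisfies: the set $\{x:\mathcal{P}(E|_{\mathbb{R}\setminus\{x\}})\neq E(x)\}$ does not have Lebesgue measure zero.
   Context: $\mathrm{Homeo}^+(\mathbb{R})$ is the group of increasing homeomorphisms of $\mathbb{R}$. For a set $S$, a weak $S$-predictor is a function $\mathcal{P}$ from the set of $S$-valued functions $f$ with domain $\mathbb{R}\setminus\{h_f\}$ for some $h_f\in\mathbb{R}$ into $S$. It is good if for every $F:\mathbb{R}\to S$ the set $\{x:\mathcal{P}(F|_{\mathbb{R}\setminus\{x\}})\neq F(x)\}$ has Lebesgue measure zero. It is $U$-anonymous if whenever $f,g$ are such functions with holes $h_f,h_g$, $\varphi\in U$, $\varphi(h_f)=h_g$, and $f=(g\circ\varphi)|_{\mathbb{R}\setminus\{h_f\}}$, then $\mathcal{P}(f)=\mathcal{P}(g)$. *)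

(* the reals are an arbitrary realType R
   (every realType is a complete archimedean ordered field, i.e. a copy of ℝ). *)
From HB Require Import structures.
From mathcomp Require Import all_boot all_order all_algebra.
From mathcomp Require Import all_classical all_reals all_analysis.
Set Implicit Arguments. Unset Strict Implicit. Unset Printing Implicit Defensive.
Import Order.TTheory GRing.Theory Num.Theory.
Import numFieldNormedType.Exports.
Local Open Scope classical_set_scope.
Local Open Scope ring_scope.

Section Defs.
Variable R : realType.

Definition homeo_plus (phi : R -> R) : Prop :=
  exists psi : R -> R,
    cancel phi psi /\ cancel psi phi /\ continuous phi /\ continuous psi /\
    (forall x y : R, x < y -> phi x < phi y).

Definition holed_fun (S : Type) : Type := {h : R & {x : R | x != h} -> S}.

Definition hole (S : Type) (f : holed_fun S) : R := projT1 f.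

Definition restr (S : Type) (F : R -> S) (x : R) : holed_fun S :=
  existT (fun h => {y : R | y != h} -> S) x (fun y => F (sval y)).

Definition weak_predictor (S : Type) : Type := holed_fun S -> S.

(* Lebesgue measure zero (null set, possibly non-measurable). *)
Definition leb_null (A : set R) : Prop :=
  (@lebesgue_measure R).-negligible A.

Definition good (S : Type) (P : weak_predictor S) : Prop :=
  forall F : R -> S, leb_null [set x | P (restr F x) <> F x].

(* U-anonymity: if phi in U, phi(h_f) = h_g and f = (g o phi) on R \ {h_f},
   then P f = P g.  (For x != h_f we have phi x != h_g by injectivity of phi,
   so the composition is defined; we quantify over the proof of that.) *)
Definition anonymous (U : set (R -> R)) (S : Type) (P : weak_predictor S)
  : Prop :=
  forall (f g : holed_fun S) (phi : R -> R),
    U phi -> phi (hole f) = hole g ->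
    (forall (x : R) (hx : x != hole f) (hy : phi x != hole g),
        projT2 f (exist _ x hx) = projT2 g (exist _ (phi x) hy)) ->
    P f = P g.

Definition quot (rel : R -> R -> Prop) : Type :=
  {C : set R | exists x : R, C = [set y | rel x y]}.

Definition eqclass (rel : R -> R -> Prop) (x : R) : quot rel :=
  exist (fun C => exists x0 : R, C = [set y | rel x0 y])
        [set y | rel x y] (ex_intro _ x erefl).

Definition class_set (rel : R -> R -> Prop) (C : quot rel) : set R := sval C.

End Defs.

From HB Require Import structures.
From mathcomp Require Import all_boot all_order all_algebra.
From mathcomp Require Import all_classical all_reals all_analysis.
Set Implicit Arguments. Unset Strict Implicit. Unset Printing Implicit Defensive.
Import Order.TTheory GRing.Theory Num.Theory.
Import numFieldNormedType.Exports.
Local Open Scope classical_set_scope.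
Local Open Scope ring_scope.

(* Hypothesis (2) lets anonymity move the hole from any x to any y while
   staying inside the class of every other point, so an anonymous predictor
   guesses one and the same class c for every restriction of
   E = eqclass rel.  It is therefore wrong at least on the complement of c,
   which is not null by hypothesis (1). *)

Section Anonymity.
Variables (R : realType) (U : set (R -> R)) (S : Type).

Lemma anonymous_restr (P : weak_predictor R S) (F : R -> S) (phi : R -> R)
    (x : R) :
  anonymous U P -> U phi -> (forall z, z != x -> F z = F (phi z)) ->
  P (restr F x) = P (restr F (phi x)).
Proof. by move=> hP Uphi hF; apply: (hP _ _ phi Uphi) => //= z hz _; apply: hF. Qed.

End Anonymity.

Section EquivalenceClasses.
Variables (R : realType) (rel : R -> R -> Prop).
Hypotheses (rel_refl : forall x, rel x x)
           (rel_sym : forall x y, rel x y -> rel y x)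
           (rel_trans : forall x y z, rel x y -> rel y z -> rel x z).

Lemma eqclass_eq (x y : R) : rel x y -> eqclass rel x = eqclass rel y.
Proof.
move=> rxy; apply: eq_exist; apply/funext => z; apply/propext.
by split=> rz; [exact: rel_trans (rel_sym rxy) rz | exact: rel_trans rxy rz].
Qed.

Lemma class_set_eqclass (x : R) : class_set (eqclass rel x) x.
Proof. exact: rel_refl. Qed.

Variable U : set (R -> R).
Hypothesis U_transitive : forall x y : R, exists phi, U phi /\ phi x = y /\
  (forall z, z != x -> rel z (phi z)).

Lemma anonymous_restr_eqclass_const (P : weak_predictor R (quot rel)) :
  anonymous U P ->
  forall x y, P (restr (@eqclass R rel) x) = P (restr (@eqclass R rel) y).
Proof.
move=> hP x y; have [phi [Uphi [<- hphi]]] := U_transitive x y.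
by apply: (anonymous_restr hP Uphi) => z /hphi; apply: eqclass_eq.
Qed.

Lemma anonymous_eqclass_errors (P : weak_predictor R (quot rel)) :
  anonymous U P ->
  exists c : quot rel, ~` class_set c `<=`
    [set x | P (restr (@eqclass R rel) x) <> eqclass rel x].
Proof.
move=> hP; exists (P (restr (@eqclass R rel) 0)) => x notcx /= Px.
apply: notcx; rewrite (anonymous_restr_eqclass_const hP 0 x) Px.
exact: class_set_eqclass.
Qed.

End EquivalenceClasses.

Theorem lemma5p2 (R : realType) (U : set (R -> R))
  (rel : R -> R -> Prop)
  (hU : forall phi, U phi -> homeo_plus phi)
  (hrefl : forall x, rel x x)
  (hsym : forall x y, rel x y -> rel y x)
  (htrans : forall x y z, rel x y -> rel y z -> rel x z)
  (h1 : forall C : quot rel, ~ leb_null (~` class_set C))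
  (h2 : forall x y : R, exists phi, U phi /\ phi x = y /\
          (forall z, z != x -> rel z (phi z))) :
  (~ exists P : weak_predictor R (quot rel), good P /\ anonymous U P) /\
  (forall P : weak_predictor R (quot rel), anonymous U P ->
     ~ leb_null [set x | P (restr (@eqclass R rel) x) <> eqclass rel x]).
Proof.
have errors_not_null P : anonymous U P ->
    ~ leb_null [set x | P (restr (@eqclass R rel) x) <> eqclass rel x].
  move=> hP null_errors.
  have [c sub_errors] := anonymous_eqclass_errors hrefl hsym htrans h2 hP.
  apply: (h1 c); apply: (negligibleS _ null_errors); exact: sub_errors.
split=> // -[P [goodP hP]].
exact: errors_not_null P hP (goodP _).
Qed.
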